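(* Let $E$ be a Borel space and consider the setting of the context. For each stopping time $\tau$, the induced policy $\pi_\tau=\{d^\tau_n,n\ge0\}$ belongs to $\Pi^0_{DH}$, i.e. each $d^\tau_n:\mathbb{R}\times\hat H_n\to A$ is measurable with $d^\tau_n(s,\hat h_n)\in A(x_n)$, and $d^\tau_n(0,\hat h_n)=0$ for all $\hat h_n\in H^0_n$.
   Context: $\Omega=\{(x_0,t_1,x_1,t_2,x_2,\dots): x_0\in E,(t_n,x_n)\in\mathbb{R}_+\times E\}$ with product Borel $\sigma$-algebra; $X_n(\omega)=x_n$, $T_0=0$, $T_{n+1}(\omega)=t_{n+1}$, $Y_n(\omega)=(x_0,t_1,x_1,\dots,t_n,x_n)$, $\mathcal{F}_n=\sigma(T_0,X_0,\dots,T_n,X_n)$. A stopping time is $\tau:\Omega\to\{0,1,2,\dots\}\cup\{+\infty\}$ with $\{\tau=n\}\in\mathcal{F}_n$ for all $n$. Decision model: $\hat E=E\cup\{\Delta\}$, $A=\{0,1\}$, $A(x)=\{0,1\}$ for $x\in E$, $A(\Delta)=\{1\}$; $\hat H_n$ is the set of histories $\hat h_n=(x_0,a_0,t_1,x_1,\dots,a_{n-1},t_n,x_n)$ with $x_m\in\hat E$, $a_m\in A(x_m)$, $t_m\in\mathbb{R}_+$; $H^0_n=E\times(\{0\}\times\mathbb{R}_+\times E)^n\subset\hat H_n$. A deterministic policy is a sequence $\{d_n\}$ of measurable $d_n:\mathbb{R}\times\hat H_n\to A$ with $d_n(s,\hat h_n)\in A(x_n)$; $\Pi^0_{DH}$ is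 the set of deterministic policies with $d_n(0,\hat h_n)=0$ for all $n$ and $\hat h_n\in H^0_n$. Induced policy: $B^\tau_n=\{Y_n(\omega):\omega\in\{\tau=n\}\}$; for $\hat h_n\in\hat H_n$ and $s\in\mathbb{R}$, $d^\tau_n(s,\hat h_n)=\mathbf{1}_{B^\tau_n}(x_0,t_1,x_1,\dots,t_n,x_n)\mathbf{1}_{(0,\infty)}(s)$ if $\hat h_n\in H^0_n$, and $d^\tau_n(s,\hat h_n)=1$ if $\hat h_n\in\hat H_n\setminus H^0_n$; $\pi_\tau=\{d^\tau_n\}$. *)

From HB Require Import structures.
From mathcomp Require Import all_boot all_order all_algebra.
From mathcomp Require Import all_classical all_reals all_analysis.
Set Implicit Arguments. Unset Strict Implicit. Unset Printing Implicit Defensive.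
Import Order.TTheory GRing.Theory Num.Theory.
Local Open Scope classical_set_scope.
Local Open Scope ring_scope.

Definition prodSA {T U} (MT : set (set T)) (MU : set (set U)) : set (set (T * U)) :=
  <<s [set X | exists A B, MT A /\ MU B /\ X = A `*` B] >>.

Definition tupleSA {T} (n : nat) (M : set (set T)) : set (set (n.-tuple T)) :=
  <<s [set X | exists S : 'I_n -> set T, (forall i, M (S i)) /\
        X = [set t : n.-tuple T | forall i, S i (tnth t i)]] >>.

Definition discrSA (T : Type) : set (set T) := setT.

Definition mble_on {T U} (MT : set (set T)) (MU : set (set U)) (D : set T)
  (f : T -> U) : Prop :=
  forall Y, MU Y -> exists S, MT S /\ D `&` f @^-1` Y = D `&` S.

Section Setting.
Context (R : realType) (d : measure_display) (E : measurableType d).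

Definition borelR : set (set R) := measurable.
Definition nnSA : set (set {nonneg R}) :=
  [set S | exists B : set R, measurable B /\ S = [set x | B x%:num]].

(* omega = (x0, k |-> (t_{k+1}, x_{k+1})) *)
Definition Omega := (E * (nat -> {nonneg R} * E))%type.

Definition Xc (m : nat) (w : Omega) : E :=
  if m is k.+1 then (w.2 k).2 else w.1.
Definition Tc (m : nat) (w : Omega) : R :=
  if m is k.+1 then ((w.2 k).1)%:num else 0.

Definition Fn (n : nat) : set (set Omega) :=
  <<s [set S | exists m, (m <= n)%N /\
        ((exists B : set E, measurable B /\ S = Xc m @^-1` B) \/
         (exists B : set R, measurable B /\ S = Tc m @^-1` B))] >>.

(* stopping times: values in {0,1,...} U {+oo}, None = +oo *)
Definition stopping_time (tau : Omega -> option nat) : Prop :=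
  forall n, Fn n [set w | tau w = Some n].

Definition Hn (n : nat) := (E * n.-tuple ({nonneg R} * E))%type.
Definition Yn (n : nat) (w : Omega) : Hn n := (w.1, [tuple w.2 i | i < n]).

(* hat E = E U {Delta}, Delta = None ; A = {0,1} = bool (true = 1) *)
Definition Ehat := option E.
Definition EhatSA : set (set Ehat) := [set S | measurable [set x | S (Some x)]].
Definition Aset (x : Ehat) : set bool := if x is Some _ then setT else [set true].

(* ambient space for histories hat h_n = (x0, a0, t1, x1, ..., a_{n-1}, t_n, x_n):
   (x0, i |-> (a_i, t_{i+1}, x_{i+1})) *)
Definition Hamb (n : nat) := (Ehat * n.-tuple (bool * {nonneg R} * Ehat))%type.
Definition HambSA (n : nat) : set (set (Hamb n)) :=
  prodSA EhatSA (@tupleSA _ n (prodSA (prodSA (@discrSA bool) nnSA) EhatSA)).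

Definition hx (n : nat) (h : Hamb n) (m : nat) : Ehat :=
  nth h.1 (h.1 :: [seq p.2 | p <- tval h.2]) m.
Definition ha (n : nat) (h : Hamb n) (i : 'I_n) : bool := (tnth h.2 i).1.1.

Definition Hhat (n : nat) : set (Hamb n) :=
  [set h | forall i : 'I_n, Aset (hx h i) (ha h i)].

(* embedding of H_n onto H^0_n = E x ({0} x R_+ x E)^n *)
Definition iotaH (n : nat) (h : Hn n) : Hamb n :=
  (Some h.1, map_tuple (fun p => (false, p.1, Some p.2)) h.2).
Definition H0 (n : nat) : set (Hamb n) := range (@iotaH n).

Definition policy := forall n : nat, R * Hamb n -> bool.

Definition Pi0DH (pi : policy) : Prop :=
  forall n : nat,
    mble_on (prodSA borelR (@HambSA n)) (@discrSA bool)
            (setT `*` @Hhat n) (pi n)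
    /\ (forall s h, @Hhat n h -> Aset (hx h n) (pi n (s, h)))
    /\ (forall h, @H0 n h -> pi n (0, h) = false).

Definition Btau (tau : Omega -> option nat) (n : nat) : set (Hn n) :=
  @Yn n @` [set w | tau w = Some n].

Definition dtau (tau : Omega -> option nat) (n : nat) (sh : R * Hamb n) : bool :=
  if `[< @H0 n sh.2 >] then
    `[< exists h, iotaH h = sh.2 /\ @Btau tau n h >] && (0 < sh.1)
  else true.

Definition pi_tau (tau : Omega -> option nat) : policy := fun n => @dtau tau n.

End Setting.

(* E is a Borel space: Borel-isomorphic to a Borel subset of R *)
Definition borel_space (R : realType) (d : measure_display) (E : measurableType d) : Prop :=
  exists f : E -> R, injective f /\ measurable_fun setT f /\
    measurable (range f) /\ (forall A, measurable A -> measurable (f @` A)).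

From HB Require Import structures.
From mathcomp Require Import all_boot all_order all_algebra.
From mathcomp Require Import all_classical all_reals all_analysis.
Set Implicit Arguments. Unset Strict Implicit. Unset Printing Implicit Defensive.
Import Order.TTheory GRing.Theory Num.Theory.
Local Open Scope classical_set_scope.
Local Open Scope ring_scope.

(* On H^0_n the induced decision is d^tau_n(s, h) = 1_{s > 0} 1_{tau(w) = n} for
   any w with Y_n(w) = h: a set of F_n is a union of fibres of Y_n, so the
   choice of w is immaterial, and w can be chosen measurably in h (forget the
   actions, fill the missing coordinates arbitrarily).  Off H^0_n the decision
   is 1.  Hence {d^tau_n = 1} is measurable.  Admissibility holds because
   histories in H^0_n never visit Delta, and d^tau_n(0, .) = 0 on H^0_n since
   0 > 0 fails. *)

Section SigmaAlgebraSetOps.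
Context {T : Type} (M : set (set T)) (hM : sigma_algebra setT M).

Lemma sigma_algebra_set0 : M set0.
Proof. by case: hM. Qed.

Lemma sigma_algebra_setC A : M A -> M (~` A).
Proof. by case: hM => _ hC _ /hC; rewrite setTD. Qed.

Lemma sigma_algebra_setT : M setT.
Proof. by rewrite -setC0; exact/sigma_algebra_setC/sigma_algebra_set0. Qed.

Lemma sigma_algebra_setU A B : M A -> M B -> M (A `|` B).
Proof.
case: hM => M0 _ MU MA MB; rewrite -bigcup2E; apply: MU => -[|[|k]] //=.
Qed.

Lemma sigma_algebra_setI A B : M A -> M B -> M (A `&` B).
Proof.
move=> MA MB; rewrite -[A `&` B]setCK setCI.
by apply/sigma_algebra_setC/sigma_algebra_setU; apply: sigma_algebra_setC.
Qed.

End SigmaAlgebraSetOps.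

Lemma g_sigma_saturated {T U} (G : set (set T)) (f : T -> U) :
  (forall A, G A -> forall x y, f x = f y -> A x -> A y) ->
  forall A, <<s G >> A -> forall x y, f x = f y -> A x -> A y.
Proof.
move=> satG A GA.
suff [B _ <-] : preimage_set_system setT f setT A.
  by move=> x y /= fxy [_ Bfx]; split => //; rewrite -fxy.
apply: (smallest_sub _ _ GA) => [|A' GA']; first exact: sigma_algebra_preimage.
exists (f @` A') => //; apply/seteqP; split => [x [_ [a A'a fax]]|x A'x] /=.
  exact: (satG _ GA' a x).
by split => //; exists x.
Qed.

Lemma g_sigma_preimage {T U} (G : set (set U)) (M : set (set T)) (f : T -> U) :
  sigma_algebra setT M -> (forall A, G A -> M (f @^-1` A)) ->
  forall A, <<s G >> A -> M (f @^-1` A).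
Proof.
move=> hM MG A GA.
have : image_set_system setT f M A.
  apply: (smallest_sub _ _ GA); first exact: sigma_algebra_image.
  by move=> B /MG; rewrite /image_set_system /= setTI.
by rewrite /image_set_system /= setTI.
Qed.

Lemma mble_on_bool {T} (M : set (set T)) (D : set T) (f : T -> bool) :
  sigma_algebra setT M -> M [set x | f x] -> mble_on M (@discrSA bool) D f.
Proof.
move=> hM Mf Y _; exists (f @^-1` Y); split => //.
have [Yt|Yt] := pselect (Y true); have [Yf|Yf] := pselect (Y false).
- rewrite (_ : f @^-1` Y = setT); first exact: sigma_algebra_setT.
  by apply/seteqP; split => x //= _; case: (f x).
- rewrite (_ : f @^-1` Y = [set x | f x]) //.
  by apply/seteqP; split => x /=; case: (f x).
- rewrite (_ : f @^-1` Y = ~` [set x | f x]); first exact: sigma_algebra_setC.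
  by apply/seteqP; split => x /=; case: (f x).
- rewrite (_ : f @^-1` Y = set0); first exact: sigma_algebra_set0.
  by apply/seteqP; split => x //=; case: (f x).
Qed.

Lemma prodSA_sigma_algebra {T U} (MT : set (set T)) (MU : set (set U)) :
  sigma_algebra setT (prodSA MT MU).
Proof. exact: smallest_sigma_algebra. Qed.

Lemma prodSA_setT {T U} (MT : set (set T)) (MU : set (set U)) : prodSA MT MU setT.
Proof. by apply: sigma_algebra_setT; exact: prodSA_sigma_algebra. Qed.

Lemma prodSA_setX {T U} (MT : set (set T)) (MU : set (set U)) A B :
  MT A -> MU B -> prodSA MT MU (A `*` B).
Proof. by move=> MA MB; apply: sub_sigma_algebra; exists A, B. Qed.

Lemma tupleSA_sigma_algebra {T} n (M : set (set T)) :
  sigma_algebra setT (@tupleSA _ n M).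
Proof. exact: smallest_sigma_algebra. Qed.

Lemma tupleSA_setT {T} n (M : set (set T)) : @tupleSA _ n M setT.
Proof. by apply: sigma_algebra_setT; exact: tupleSA_sigma_algebra. Qed.

Lemma tupleSA_rect {T} n (M : set (set T)) (S : 'I_n -> set T) :
  (forall i, M (S i)) ->
  @tupleSA _ n M [set t : n.-tuple T | forall i, S i (tnth t i)].
Proof. by move=> MS; apply: sub_sigma_algebra; exists S. Qed.

Lemma tupleSA_nth {T} n (M : set (set T)) (x0 : T) k (B : set T) :
  M setT -> (k < n)%N -> M B ->
  @tupleSA _ n M [set t : n.-tuple T | B (nth x0 t k)].
Proof.
move=> MT kn MB; pose S (i : 'I_n) := if val i == k then B else setT.
rewrite (_ : [set t | _] = [set t | forall i, S i (tnth t i)]).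
  by apply: tupleSA_rect => i; rewrite /S; case: eqP.
apply/seteqP; split => t /=.
- by move=> Bt i; rewrite /S; case: eqP => // ik; rewrite (tnth_nth x0) ik.
- by move=> /(_ (Ordinal kn)); rewrite /S /= eqxx (tnth_nth x0).
Qed.

Lemma borelR_gt0 (R : realType) : borelR [set x : R | 0 < x].
Proof.
rewrite (_ : [set x | 0 < x] = `]0, +oo[%classic); first exact: measurable_itv.
by apply/seteqP; split => x /=; rewrite in_itv /= andbT.
Qed.

Section InducedPolicy.
Context (R : realType) (d : measure_display) (E : measurableType d) (n : nat).

Local Notation HambSA := (@HambSA R d E n).
Local Notation H0n := (@H0 R d E n).

Definition hist_default : bool * {nonneg R} * Ehat E := (false, 0%:nng, None).

Definition omega_of_hist (h : Hamb R E n) : Omega R E :=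
  (odflt point h.1,
   fun k => let p := nth hist_default h.2 k in (p.1.2, odflt point p.2)).

Lemma Yn_omega_of_hist (h : Hn R E n) : Yn n (omega_of_hist (iotaH h)) = h.
Proof.
case: h => x t; rewrite /Yn /omega_of_hist /iotaH /=; congr pair.
apply: eq_from_tnth => i; rewrite tnth_mktuple.
rewrite -[nth _ _ _](tnth_nth hist_default (map_tuple _ t) i) tnth_map /=.
by case: (tnth t i).
Qed.

Lemma Yn_coord (w w' : Omega R E) m : Yn n w = Yn n w' -> (m <= n)%N ->
  Xc m w = Xc m w' /\ Tc m w = Tc m w'.
Proof.
move=> eY; case: m => [|k] kn; first by have /= -> := congr1 fst eY.
have := congr1 (fun h => tnth h.2 (Ordinal kn)) eY.
by rewrite /= !tnth_mktuple => ->.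
Qed.

Lemma Fn_saturated (S : set (Omega R E)) (w w' : Omega R E) :
  Fn n S -> Yn n w = Yn n w' -> S w -> S w'.
Proof.
move=> FS; apply: (g_sigma_saturated _ FS) => {S FS w w'} A.
move=> [m [mn [[B [_ ->]]|[B [_ ->]]]]] w w' /Yn_coord/(_ mn)[eX eT];
  by rewrite /preimage /= ?eX ?eT.
Qed.

Lemma Btau_iotaHE (tau : Omega R E -> option nat) (h : Hn R E n) :
  stopping_time tau ->
  Btau tau h <-> tau (omega_of_hist (iotaH h)) = Some n.
Proof.
move=> st; split => [[w tw Yw]|tn]; last first.
  by exists (omega_of_hist (iotaH h)); last exact: Yn_omega_of_hist.
by apply: (Fn_saturated (st n) _ tw); rewrite Yn_omega_of_hist.
Qed.

Lemma iotaH_inj : injective (@iotaH R d E n).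
Proof. exact: (can_inj (g := Yn n \o omega_of_hist) Yn_omega_of_hist). Qed.


Lemma omega_of_hist_Xc_measurable m (B : set E) : (m <= n)%N -> measurable B ->
  HambSA (omega_of_hist @^-1` (Xc m @^-1` B)).
Proof.
move=> + mB; case: m => [|k] kn.
  rewrite (_ : _ @^-1` _ = [set o | B (odflt point o)] `*` setT).
    by apply: prodSA_setX => //; exact: tupleSA_setT.
  by apply/seteqP; split => h /=; [move=> ?; split|case].
rewrite (_ : _ @^-1` _ = setT `*` [set t : n.-tuple _ |
    (setT `*` [set o | B (odflt point o)]) (nth hist_default t k)]).
  apply: prodSA_setX; first exact: measurableT.
  apply: tupleSA_nth => //; first exact: prodSA_setT.
  by apply: prodSA_setX => //; exact: prodSA_setT.
by apply/seteqP; split => h /=; [move=> ?; split => //; split|case=> _ []].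
Qed.

Lemma omega_of_hist_Tc_measurable m (B : set R) : (m <= n)%N -> measurable B ->
  HambSA (omega_of_hist @^-1` (Tc m @^-1` B)).
Proof.
move=> + mB; case: m => [|k] kn.
  have [B0|B0] := pselect (B 0).
    by rewrite (_ : _ @^-1` _ = setT); [exact: prodSA_setT|apply/seteqP; split].
  rewrite (_ : _ @^-1` _ = set0); last by apply/seteqP; split.
  by apply: sigma_algebra_set0; exact: prodSA_sigma_algebra.
rewrite (_ : _ @^-1` _ = setT `*` [set t : n.-tuple _ |
    (([set: bool] `*` [set x | B x%:num]) `*` setT) (nth hist_default t k)]).
  apply: prodSA_setX; first exact: measurableT.
  apply: tupleSA_nth => //; first exact: prodSA_setT.
  apply: prodSA_setX; last exact: measurableT.
  by apply: prodSA_setX => //; exists B.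
apply/seteqP; split => h /=; last by case=> _ [[]].
by move=> ?; split => //; split => //; split.
Qed.

Lemma omega_of_hist_measurable (S : set (Omega R E)) :
  Fn n S -> HambSA (omega_of_hist @^-1` S).
Proof.
apply: g_sigma_preimage; first exact: prodSA_sigma_algebra.
move=> _ [m [mn [[B [mB ->]]|[B [mB ->]]]]].
- exact: omega_of_hist_Xc_measurable.
- exact: omega_of_hist_Tc_measurable.
Qed.

Definition H0_step : set (bool * {nonneg R} * Ehat E) :=
  ([set false] `*` setT) `*` [set o | o <> None].

Lemma H0E : H0n = [set o | o <> None] `*` [set t | forall i, H0_step (tnth t i)].
Proof.
apply/seteqP; split => [_ [[x t] _ <-]|[[x0|] t] [/= Hx Ht]] //.
  by split => // i; rewrite tnth_map.
pose forget (p : bool * {nonneg R} * Ehat E) := (p.1.2, odflt x0 p.2).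
exists (x0, map_tuple forget t) => //.
congr pair; apply: eq_from_tnth => i; rewrite !tnth_map /=.
by have := Ht i; case: (tnth t i) => [[a r] [y|]] [[/= -> _]].
Qed.

Lemma H0_measurable : HambSA H0n.
Proof.
have EhatSA_Some : @EhatSA d E [set o | o <> None].
  rewrite /EhatSA /= (_ : [set x | Some x <> None] = setT) //.
  by apply/seteqP; split.
rewrite H0E; apply: prodSA_setX => //.
apply: (@tupleSA_rect _ _ _ (fun _ => H0_step)) => i.
by apply: prodSA_setX => //; apply: prodSA_setX => //; exists setT.
Qed.

Lemma H0_hx (h : Hamb R E n) m : H0n h -> hx h m <> None.
Proof.
case=> [[x t] _ <-]; rewrite /hx /iotaH; case: m => [|k] //=.
have [lt|ge] := ltnP k (size t); last by rewrite nth_default // !size_map.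
by rewrite -map_comp (nth_map (0%:nng, x)).
Qed.

Section StoppingTime.
Variable tau : Omega R E -> option nat.
Hypothesis st : stopping_time tau.

Lemma H0_BtauE (h : Hamb R E n) : H0n h ->
  (exists h', iotaH h' = h /\ Btau tau h') <-> tau (omega_of_hist h) = Some n.
Proof.
case=> h0 _ <-; rewrite -Btau_iotaHE //.
by split => [[h' [/iotaH_inj -> //]]|?]; exists h0.
Qed.

Lemma dtau_setE : [set sh | dtau tau sh] =
  (setT `*` ~` H0n) `|`
  ([set s | 0 < s] `*` (H0n `&` omega_of_hist @^-1` [set w | tau w = Some n])).
Proof.
apply/seteqP; split => -[s h]; rewrite /dtau /=; case: asboolP => hH /=.
- by move=> /andP[/asboolP /(H0_BtauE hH) ? ?]; right.
- by left.
- case=> [[]//|[s0 [_ /(H0_BtauE hH) ?]]].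
  by apply/andP; split => //; apply/asboolP.
- by [].
Qed.

Lemma dtau_measurable : prodSA (@borelR R) HambSA [set sh | dtau tau sh].
Proof.
have saH : sigma_algebra setT HambSA by exact: prodSA_sigma_algebra.
rewrite dtau_setE; apply: (sigma_algebra_setU (prodSA_sigma_algebra _ _)).
  apply: prodSA_setX; first exact: measurableT.
  exact: (sigma_algebra_setC saH H0_measurable).
apply: prodSA_setX; first exact: borelR_gt0.
apply: (sigma_algebra_setI saH H0_measurable).
apply: omega_of_hist_measurable; exact: st.
Qed.

End StoppingTime.

Lemma dtau_admissible tau s (h : Hamb R E n) : Aset (hx h n) (dtau tau (s, h)).
Proof.
rewrite /dtau /=; case: asboolP => [hH|_]; last by case: (hx h n).
by case: (hx h n) (@H0_hx h n hH).
Qed.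

Lemma dtau_at0 tau (h : Hamb R E n) : H0n h -> dtau tau (0, h) = false.
Proof. by rewrite /dtau /= ltxx andbF; case: asboolP. Qed.

End InducedPolicy.

Theorem lemma4p3 (R : realType) (d : measure_display) (E : measurableType d)
  (hE : borel_space R E) (tau : Omega R E -> option nat) :
  stopping_time tau -> Pi0DH (pi_tau tau).
Proof.
move=> st n; split; [|split].
- apply: mble_on_bool; first exact: prodSA_sigma_algebra.
  exact: dtau_measurable.
- by move=> s h _; exact: dtau_admissible.
- by move=> h; exact: dtau_at0.
Qed.
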